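(* Let $Q$ be a finite right Bol loop of odd order and let $H$ be a subgroup of $N_\lambda(Q)$ of order $3$. Suppose that $T_x(H)\subseteq H$ for all $x\in Q$. Then $H\subseteq C(Q)$, i.e. every element of $H$ commutes with every element of $Q$.
   Context: A loop is a set with a binary multiplication and a two-sided identity $1$ in which all left and right translations $L_x(y)=xy$, $R_x(y)=yx$ are bijections. A loop is right Bol if it satisfies $((xy)z)y=x((yz)y)$ for all $x,y,z$. For $x\in Q$, $T_x=L_x^{-1}R_x$, so $T_x(y)=x\backslash(yx)$. The left nucleus is $N_\lambda(Q)=\{x\in Q: x\cdot yz=xy\cdot z \text{ for all } y,z\in Q\}$. The commutant is $C(Q)=\{x\in Q: xy=yx\text{ for all }y\in Q\}$. *)

From mathcomp Require Import all_boot.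
Set Implicit Arguments. Unset Strict Implicit. Unset Printing Implicit Defensive.

(* A finite loop: a finite type with a binary multiplication, a two-sided
   identity, and bijective left and right translations (on a finite type
   bijectivity = injectivity). *)
Record finLoop := FinLoop {
  lcar :> finType;
  lmul : lcar -> lcar -> lcar;
  lone : lcar;
  lmul1x : forall x, lmul lone x = x;
  lmulx1 : forall x, lmul x lone = x;
  lL_inj : forall x, injective (lmul x);
  lR_inj : forall x, injective (fun y => lmul y x)
}.

Section LoopDefs.
Variable Q : finLoop.
Local Notation "x * y" := (lmul x y).

Definition right_Bol := forall x y z : Q, ((x * y) * z) * y = x * ((y * z) * y).

Definition ldiv (x y : Q) : Q := invF (@lL_inj Q x) y.

Definition Tmap (x : Q) (y : Q) : Q := ldiv x (y * x).

Definition lnucleus : {set Q} :=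
  [set a | [forall y, forall z, a * (y * z) == (a * y) * z]].

Definition commutant : {set Q} := [set a | [forall y, a * y == y * a]].

Definition subloop (H : {set Q}) :=
  lone Q \in H /\
  (forall a b, a \in H -> b \in H -> a * b \in H) /\
  (forall a b, a \in H -> b \in H -> ldiv a b \in H).
End LoopDefs.

From mathcomp Require Import all_boot.

(* Writing H = {1, h, h^2}, the hypothesis T_x(h) \in H says h x = x h or
   h x = x h^2 for every x.  If some b had h b = b h^2, the right Bol identity
   would make right translation by b exchange the centralizer of h with its
   complement, so |Q| would be even.  Hence h, and with it h^2, commutes with
   everything. *)

Set Implicit Arguments. Unset Strict Implicit. Unset Printing Implicit Defensive.

Local Notation "x * y" := (lmul x y).

Lemma card3_exists_other (T : finType) (H : {set T}) a b :
  #|H| = 3 -> exists2 k, k \in H & k \notin [set a; b].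
Proof.
move=> cardH; apply/exists_inP; rewrite -negb_forall_in; apply/negP => /forall_inP.
move=> sub; have /subset_leq_card : H \subset [set a; b] by apply/subsetP.
by rewrite cards2 cardH; case: (a != b).
Qed.

Lemma card3_setE (T : finType) (H : {set T}) a b c :
  #|H| = 3 -> a \in H -> b \in H -> c \in H ->
  a != b -> a != c -> b != c -> H = [set a; b; c].
Proof.
move=> cardH aH bH cH ab ac bc; apply/eqP; rewrite eq_sym eqEcard.
rewrite cardH -setUA cardsU1 cards2 !inE negb_or ab ac bc leqnn andbT.
by apply/subsetP=> x; rewrite !inE => /or3P[] /eqP ->.
Qed.

Section Loop.
Variable Q : finLoop.
Implicit Types a h x y z : Q.

Lemma lmul_eq_l x y : x * y = x -> y = lone Q.
Proof. by rewrite -{2}[x]lmulx1 => /lL_inj. Qed.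

Lemma lmul_eq_r x y : y * x = x -> y = lone Q.
Proof. by rewrite -{2}[x]lmul1x => /lR_inj. Qed.

Lemma mul_Tmap x y : x * Tmap x y = y * x.
Proof. by rewrite /Tmap /ldiv f_invF. Qed.

Lemma lnucleusP a :
  reflect (forall y z, a * (y * z) = (a * y) * z) (a \in lnucleus Q).
Proof.
rewrite inE; apply: (iffP forallP) => [N y z | N y].
  by apply/eqP; have /forallP := N y; apply.
by apply/forallP=> z; rewrite N.
Qed.

Lemma commutantP a : reflect (forall y, a * y = y * a) (a \in commutant Q).
Proof. by rewrite inE; apply: (iffP forallP) => N y; apply/eqP/N. Qed.

Lemma subloop3_cube (H : {set Q}) h :
  lone Q \in H -> (forall a b, a \in H -> b \in H -> a * b \in H) ->
  #|H| = 3 -> h \in H -> h != lone Q ->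
  h * (h * h) = lone Q /\ H = [set lone Q; h; h * h].
Proof.
move=> H1 HM cardH hH h_neq1.
have hh_neq_h : h * h != h by apply: contra_neq h_neq1; apply: lmul_eq_r.
have hh_neq1 : h * h != lone Q.
  apply/eqP => hh1; have [k kH] := card3_exists_other (lone Q) h cardH.
  rewrite !inE negb_or => /andP[k_neq1 k_neq_h].
  have HE : H = [set lone Q; h; k] by apply: card3_setE; rewrite // eq_sym.
  have := HM _ _ hH kH; rewrite HE !inE -orbA => /or3P[] /eqP hk.
  - by move: k_neq_h; rewrite -hh1 in hk; rewrite (lL_inj hk) eqxx.
  - by move: k_neq1; rewrite (lmul_eq_l hk) eqxx.
  - by move: h_neq1; rewrite (lmul_eq_r hk) eqxx.
have HE : H = [set lone Q; h; h * h].
  by apply: card3_setE; rewrite ?HM // eq_sym.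
split=> //; have := HM _ _ hH (HM _ _ hH hH); rewrite HE !inE -orbA.
case/or3P=> /eqP hhh //.
- by move: hh_neq1; rewrite (lmul_eq_l hhh) eqxx.
- by move: h_neq1; rewrite (lmul_eq_r hhh) eqxx.
Qed.

Section RightBol.
Hypothesis bolQ : right_Bol Q.

Lemma right_Bol_alternative x y : (x * y) * y = x * (y * y).
Proof. by have := bolQ x y (lone Q); rewrite !lmulx1. Qed.

Variable h : Q.
Hypothesis h_nucl : forall y z, h * (y * z) = (h * y) * z.

Lemma commute_sqr x : h * x = x * h -> (h * h) * x = x * (h * h).
Proof. by move=> hx; rewrite -h_nucl hx h_nucl hx right_Bol_alternative. Qed.

Hypothesis h_cube : (h * h) * h = lone Q.
Hypothesis h_neq1 : h != lone Q.
Hypothesis h_dichotomy : forall x, h * x = x * h \/ h * x = x * (h * h).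

Let C := [set x | h * x == x * h].

Lemma mul_sqrK x : (x * (h * h)) * h = x.
Proof. by rewrite -right_Bol_alternative bolQ h_cube lmulx1. Qed.

Lemma mulr_noncentral_swap b w : b \notin C -> (w * b \in C) = (w \notin C).
Proof.
rewrite !inE => /eqP hb; have {}hb : h * b = b * (h * h).
  by case: (h_dichotomy b).
have wbh : (w * b) * h = (w * (h * h)) * b.
  by have := bolQ (w * (h * h)) h b; rewrite mul_sqrK hb mul_sqrK.
apply/idP/idP => [/eqP hwb | ].
  apply/negP => /eqP /commute_sqr hw; apply/negP: h_neq1; rewrite negbK.
  have : (w * b) * h = h * (h * (w * b)) by rewrite wbh -hw -!h_nucl.
  by rewrite -hwb => /lL_inj/esym/lmul_eq_r/eqP.
move=> /eqP hw; case: (h_dichotomy w) => // {}hw.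
by rewrite h_nucl hw -wbh.
Qed.

Lemma odd_card_commute : odd #|Q| -> forall x, h * x = x * h.
Proof.
move=> oddQ x; apply/eqP; suff : x \in C by rewrite inE.
apply: contraTT oddQ => /mulr_noncentral_swap swap.
have preC : (fun w => w * x) @^-1: C = ~: C.
  by apply/setP => w; rewrite in_setC -swap inE.
have := card_preimset C (@lR_inj Q x); rewrite preC => cardC.
by rewrite -(cardsC C) -cardC addnn odd_double.
Qed.

End RightBol.
End Loop.

Theorem lemma4p10 (Q : finLoop) (H : {set Q}) :
  right_Bol Q -> odd #|Q| ->
  subloop H -> H \subset lnucleus Q -> #|H| = 3 ->
  (forall x h, h \in H -> Tmap x h \in H) ->
  H \subset commutant Q.
Proof.
move=> bolQ oddQ [H1 [HM _]] /subsetP HN cardH HT.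
have [h hH] := card3_exists_other (lone Q) (lone Q) cardH.
rewrite !inE orbb => h_neq1.
have /lnucleusP h_nucl := HN h hH.
have [h_cube HE] := subloop3_cube H1 HM cardH hH h_neq1.
rewrite h_nucl in h_cube.
have h_dichotomy x : h * x = x * h \/ h * x = x * (h * h).
  have := mul_Tmap x h; have := HT x h hH; rewrite HE !inE -orbA.
  case/or3P=> /eqP ->; [|by move<-; left|by move<-; right].
  by rewrite lmulx1 => /esym/lmul_eq_r/eqP; rewrite (negPf h_neq1).
have h_central := odd_card_commute bolQ h_nucl h_cube h_neq1 h_dichotomy oddQ.
apply/subsetP => a; rewrite HE => aH; apply/commutantP => y.
move: aH; rewrite !inE -orbA => /or3P[] /eqP ->.
- by rewrite lmul1x lmulx1.
- exact: h_central.
- exact: commute_sqr.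
Qed.
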